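(* Let $R$ be a ring with a set of local units $E$ and let $E'\subseteq E$ be closed under joins $e_1\vee e_2=e_1+e_2-e_1e_2$ and meets $e_1\wedge e_2=e_1e_2$, ordered by $e_i\le e_j\iff e_ie_j=e_i$. For $e_i\le e_j$ let $\varphi_{ij}:Re_i\hookrightarrow Re_j$ be the inclusion, $\psi_{ji}:Re_j\to Re_i$, $m\mapsto me_i$, and $\phi_{ij}:\mathrm{End}_R(Re_i)^{\mathrm{op}}\to\mathrm{End}_R(Re_j)^{\mathrm{op}}$, $f\mapsto\varphi_{ij}\circ f\circ\psi_{ji}$; let $h_{ij}:e_iRe_i\hookrightarrow e_jRe_j$ be the inclusion. Then the directed systems $\langle\{\mathrm{End}_R(Re_i)^{\mathrm{op}}\}_{e_i\in E'},\{\phi_{ij}\}\rangle$ and $\langle\{e_iRe_i\}_{e_i\in E'},\{h_{ij}\}\rangle$ are isomorphic (via $f\mapsto f(e_i)$), and consequently $\varinjlim_{e_i\in E'}\mathrm{End}_R(Re_i)^{\mathrm{op}}\cong\bigcup_{e_i\in E'}e_iRe_i$ as rings with local units.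
   Context: A ring with local units is a ring $R$ with a set $E$ of pairwise commuting idempotents such that $R=\bigcup_{e\in E}eRe$. $\mathrm{End}_R(M)$ is the ring of left $R$-module endomorphisms with multiplication given by composition, and $^{\mathrm{op}}$ denotes the opposite ring. *)

(* A "ring" here is a possibly non-unital associative ring:
   an additive group V (zmodType) with a bilinear associative multiplication. *)
From HB Require Import structures.
From mathcomp Require Import all_boot all_algebra.
Set Implicit Arguments. Unset Strict Implicit. Unset Printing Implicit Defensive.
Import GRing.Theory.
Local Open Scope ring_scope.

Section Defs.
Variables (V : zmodType) (mul : V -> V -> V).
Local Notation "x ** y" := (mul x y) (at level 40, left associativity).

Definition rng_axioms :=
  (forall x y z, x ** (y ** z) = (x ** y) ** z) /\
  (forall x y z, x ** (y + z) = x ** y + x ** z) /\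
  (forall x y z, (x + y) ** z = x ** z + y ** z).

Definition idempotent (e : V) := e ** e = e.
Definition in_corner (e r : V) := exists s, r = (e ** s) ** e.
Definition local_units (E : V -> Prop) :=
  (forall e, E e -> idempotent e) /\
  (forall e1 e2, E e1 -> E e2 -> e1 ** e2 = e2 ** e1) /\
  (forall r, exists e, E e /\ in_corner e r).

Definition ejoin (e1 e2 : V) := e1 + e2 - e1 ** e2.
Definition emeet (e1 e2 : V) := e1 ** e2.
Definition ele (e1 e2 : V) := e1 ** e2 = e1.

Definition in_Re (e x : V) := exists r, x = r ** e.

(* f (restricted to Re) is a left R-module endomorphism of Re.
   Elements of End_R(Re) are represented by functions V -> V, two of them
   being identified when they agree on Re (End_eq). *)
Definition is_End (e : V) (f : V -> V) :=
  (forall x, in_Re e x -> in_Re e (f x)) /\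
  (forall x y, in_Re e x -> in_Re e y -> f (x + y) = f x + f y) /\
  (forall r x, in_Re e x -> f (r ** x) = r ** f x).
Definition End_eq (e : V) (f g : V -> V) := forall x, in_Re e x -> f x = g x.

Definition End_add (f g : V -> V) := fun x => f x + g x.
Definition End_opmul (f g : V -> V) := fun x => g (f x).
Definition End_one := fun x : V => x.

(* phi_ij f = varphi_ij o f o psi_ji, psi_ji m = m e_i, varphi_ij inclusion *)
Definition psi (ei m : V) := m ** ei.
Definition phi (ei : V) (f : V -> V) := fun m => f (psi ei m).

Definition theta (ei : V) (f : V -> V) := f ei.

Definition phi_directed_system (E' : V -> Prop) :=
  (forall ei ej f, E' ei -> E' ej -> ele ei ej -> is_End ei f ->
     is_End ej (phi ei f)) /\
  (forall ei ej f g, E' ei -> E' ej -> ele ei ej -> is_End ei f -> is_End ei g ->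
     End_eq ej (phi ei (End_add f g)) (End_add (phi ei f) (phi ei g)) /\
     End_eq ej (phi ei (End_opmul f g)) (End_opmul (phi ei f) (phi ei g))) /\
  (forall ei f, E' ei -> is_End ei f -> End_eq ei (phi ei f) f) /\
  (forall ei ej ek f, E' ei -> E' ej -> E' ek -> ele ei ej -> ele ej ek ->
     is_End ei f -> End_eq ek (phi ej (phi ei f)) (phi ei f)).

Definition directed_systems_iso (E' : V -> Prop) :=
  (forall ei, E' ei ->
     (forall f, is_End ei f -> in_corner ei (theta ei f)) /\
     (forall f g, is_End ei f -> is_End ei g ->
        (theta ei f = theta ei g <-> End_eq ei f g)) /\
     (forall r, in_corner ei r -> exists f, is_End ei f /\ theta ei f = r) /\
     (forall f g, is_End ei f -> is_End ei g ->
        is_End ei (End_add f g) /\ is_End ei (End_opmul f g) /\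
        theta ei (End_add f g) = theta ei f + theta ei g /\
        theta ei (End_opmul f g) = theta ei f ** theta ei g) /\
     is_End ei End_one /\ theta ei End_one = ei) /\
  (forall ei ej f, E' ei -> E' ej -> ele ei ej -> is_End ei f ->
     theta ej (phi ei f) = theta ei f).

(* The direct limit of End_R(Re_i)^op over E': representatives are pairs
   (e_i, f) with f in End_R(Re_i); equivalence and operations are the
   standard ones for a direct limit over the directed poset (E', <=). *)
Record dl_elt := DL { dl_idx : V; dl_fn : V -> V }.
Definition dl_ok (E' : V -> Prop) (a : dl_elt) := E' (dl_idx a) /\ is_End (dl_idx a) (dl_fn a).
Definition dl_eq (E' : V -> Prop) (a b : dl_elt) :=
  exists ek, E' ek /\ ele (dl_idx a) ek /\ ele (dl_idx b) ek /\
    End_eq ek (phi (dl_idx a) (dl_fn a)) (phi (dl_idx b) (dl_fn b)).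
Definition dl_add (a b : dl_elt) :=
  DL (ejoin (dl_idx a) (dl_idx b))
     (End_add (phi (dl_idx a) (dl_fn a)) (phi (dl_idx b) (dl_fn b))).
Definition dl_mul (a b : dl_elt) :=
  DL (ejoin (dl_idx a) (dl_idx b))
     (End_opmul (phi (dl_idx a) (dl_fn a)) (phi (dl_idx b) (dl_fn b))).
Definition dl_unit (e : V) := DL e End_one.
Definition Theta (a : dl_elt) := dl_fn a (dl_idx a).

Definition corner_union (E' : V -> Prop) (r : V) := exists e, E' e /\ in_corner e r.

Definition colimit_iso (E' : V -> Prop) :=
  (forall a b, dl_ok E' a -> dl_ok E' b -> (dl_eq E' a b <-> Theta a = Theta b)) /\
  (forall a, dl_ok E' a -> corner_union E' (Theta a)) /\
  (forall r, corner_union E' r -> exists a, dl_ok E' a /\ Theta a = r) /\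
  (forall a b, dl_ok E' a -> dl_ok E' b ->
     dl_ok E' (dl_add a b) /\ dl_ok E' (dl_mul a b) /\
     Theta (dl_add a b) = Theta a + Theta b /\
     Theta (dl_mul a b) = Theta a ** Theta b) /\
  (forall e, E' e -> dl_ok E' (dl_unit e) /\ Theta (dl_unit e) = e).
End Defs.

(* An R-linear endomorphism f of Re satisfies f(re) = r f(e), so it is right
   multiplication by f(e) ∈ eRe; hence f ↦ f(e) is a ring isomorphism
   End_R(Re)^op ≅ eRe.  For e_i ≤ e_j the map φ_ij f is right multiplication
   by the same element f(e_i), so these isomorphisms intertwine φ_ij with the
   inclusion e_iRe_i ⊆ e_jRe_j.  Since E' is directed by joins, the direct
   limit of the corners along inclusions is their union, and evaluation at the
   index idempotent identifies it with the direct limit of the End_R(Re_i)^op. *)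
From Pilot Require Import Defs.
From mathcomp Require Import all_boot all_algebra.
Import GRing.Theory.
Local Open Scope ring_scope.
Set Implicit Arguments. Unset Strict Implicit.

Section Rng.
Variables (V : zmodType) (mul : V -> V -> V).
Hypothesis HR : rng_axioms mul.
Local Notation "x ** y" := (mul x y) (at level 40, left associativity).

Lemma rng_mulA x y z : x ** (y ** z) = (x ** y) ** z. Proof. by case: HR. Qed.
Lemma rng_mulrDr x y z : x ** (y + z) = x ** y + x ** z. Proof. by case: HR => _ []. Qed.
Lemma rng_mulrDl x y z : (x + y) ** z = x ** z + y ** z. Proof. by case: HR => _ []. Qed.

Lemma rng_mulr0 x : x ** 0 = 0.
Proof.
apply: (@addrI _ (x ** 0)).
by rewrite addr0 -rng_mulrDr addr0.
Qed.

Lemma rng_mulrN x y : x ** (- y) = - (x ** y).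
Proof. by apply: (@addrI _ (x ** y)); rewrite -rng_mulrDr !subrr rng_mulr0. Qed.

Lemma rng_mulrBr x y z : x ** (y - z) = x ** y - x ** z.
Proof. by rewrite rng_mulrDr rng_mulrN. Qed.

Section Corner.
Variable e : V.
Hypothesis He : Defs.idempotent mul e.

Lemma in_Re_mulr_idem x : in_Re mul e x -> x ** e = x.
Proof. by move=> [r ->]; rewrite -rng_mulA He. Qed.

Lemma in_Re_idem : in_Re mul e e.
Proof. by exists e. Qed.

Lemma End_mul_idem f r : is_End mul e f -> f (r ** e) = r ** f e.
Proof. by move=> [_ [_ Hf]]; apply: Hf; exact: in_Re_idem. Qed.

Lemma End_idem_in_Re f : is_End mul e f -> f e ** e = f e.
Proof. by move=> [Hf _]; apply: in_Re_mulr_idem; apply: Hf; exact: in_Re_idem. Qed.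

Lemma theta_in_corner f : is_End mul e f -> in_corner mul e (theta e f).
Proof.
move=> Hf; exists (f e); rewrite /theta.
by rewrite -rng_mulA End_idem_in_Re // -End_mul_idem // He.
Qed.

Lemma theta_eq_End_eq f g : is_End mul e f -> is_End mul e g ->
  theta e f = theta e g <-> End_eq mul e f g.
Proof.
move=> Hf Hg; rewrite /theta; split=> [Hfg x [r ->] | Hfg]; last exact/Hfg/in_Re_idem.
by rewrite !End_mul_idem // Hfg.
Qed.

Lemma is_End_add f g : is_End mul e f -> is_End mul e g -> is_End mul e (End_add f g).
Proof.
move=> [f1 [f2 f3]] [g1 [g2 g3]]; split; [|split] => [x Hx | x y Hx Hy | r x Hx].
- exists (f x + g x).
  by rewrite rng_mulrDl !in_Re_mulr_idem //; [apply: g1 | apply: f1].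
- by rewrite /End_add f2 // g2 // addrACA.
- by rewrite /End_add f3 // g3 // rng_mulrDr.
Qed.

Lemma is_End_opmul f g : is_End mul e f -> is_End mul e g -> is_End mul e (End_opmul f g).
Proof.
move=> [f1 [f2 f3]] [g1 [g2 g3]]; split; [|split] => [x Hx | x y Hx Hy | r x Hx].
- exact/g1/f1.
- by rewrite /End_opmul f2 // g2 //; apply: f1.
- by rewrite /End_opmul f3 // g3 //; apply: f1.
Qed.

Lemma is_End_one : is_End mul e (@End_one V).
Proof. by []. Qed.

Lemma is_End_mulr r : in_corner mul e r -> is_End mul e (fun x => x ** r).
Proof.
move=> [s ->]; split; [|split] => [x _ | x y _ _ | r' x _].
- by exists (x ** (e ** s)); rewrite rng_mulA.
- exact: rng_mulrDl.
- by rewrite [RHS]rng_mulA.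
Qed.

Lemma theta_mulr r : in_corner mul e r -> theta e (fun x => x ** r) = r.
Proof. by move=> [s ->]; rewrite /theta !rng_mulA He. Qed.

Lemma theta_add f g : theta e (End_add f g) = theta e f + theta e g.
Proof. by []. Qed.

Lemma theta_opmul f g : is_End mul e f -> is_End mul e g ->
  theta e (End_opmul f g) = theta e f ** theta e g.
Proof. by move=> Hf Hg; rewrite /theta /End_opmul -{1}End_idem_in_Re // End_mul_idem. Qed.

Lemma phi_eval f x : is_End mul e f -> phi mul e f x = x ** theta e f.
Proof. exact: End_mul_idem. Qed.

Lemma phi_opmul f g x : is_End mul e f ->
  phi mul e (End_opmul f g) x = End_opmul (phi mul e f) (phi mul e g) x.
Proof.
move=> [Hf _]; rewrite /phi /psi /End_opmul [f _ ** e]in_Re_mulr_idem //.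
by apply: Hf; exists x.
Qed.

Lemma phi_End_eq f : End_eq mul e (phi mul e f) f.
Proof. by move=> x Hx; rewrite /phi /psi in_Re_mulr_idem. Qed.

End Corner.

Section Comparable.
Variables ei ej : V.
Hypothesis Hi : Defs.idempotent mul ei.
Hypothesis Hle : ele mul ei ej.

Lemma is_End_phi f : is_End mul ei f -> is_End mul ej (phi mul ei f).
Proof.
move=> Hf; have [_ [Hadd _]] := Hf.
split; [|split] => [x _ | x y _ _ | r x _].
- have fei_ej : f ei ** ej = f ei.
    by rewrite -(End_idem_in_Re Hi Hf) -rng_mulA Hle.
  by exists (x ** f ei); rewrite phi_eval // /theta -rng_mulA fei_ej.
- by rewrite /phi /psi rng_mulrDl Hadd //; [exists x | exists y].
- by rewrite !phi_eval // rng_mulA.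
Qed.

Hypothesis Hcomm : ej ** ei = ei ** ej.

Lemma ele_mull : ej ** ei = ei.
Proof. by rewrite Hcomm. Qed.

Lemma theta_phi f : theta ej (phi mul ei f) = theta ei f.
Proof. by rewrite /theta /phi /psi ele_mull. Qed.

Lemma phi_phi f x : phi mul ej (phi mul ei f) x = phi mul ei f x.
Proof. by rewrite /phi /psi -rng_mulA ele_mull. Qed.

End Comparable.

Lemma ele_ejoinl a b : Defs.idempotent mul a -> ele mul a (ejoin mul a b).
Proof.
move=> Ha; rewrite /ele /ejoin rng_mulrBr rng_mulrDr rng_mulA Ha.
by rewrite addrK.
Qed.

Lemma ele_ejoinr a b : Defs.idempotent mul b -> b ** a = a ** b ->
  ele mul b (ejoin mul a b).
Proof.
move=> Hb Hba; rewrite /ele /ejoin rng_mulrBr rng_mulrDr rng_mulA Hba.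
by rewrite -rng_mulA Hb addrC addKr.
Qed.

Lemma ThetaE (a : dl_elt V) : Theta a = theta (dl_idx a) (dl_fn a).
Proof. by []. Qed.

Section Directed.
Variable E' : V -> Prop.
Hypothesis HE_idem : forall e, E' e -> Defs.idempotent mul e.
Hypothesis HE_comm : forall e1 e2, E' e1 -> E' e2 -> e1 ** e2 = e2 ** e1.
Hypothesis HE_join : forall e1 e2, E' e1 -> E' e2 -> E' (ejoin mul e1 e2).

Lemma ejoin_ub a b : E' a -> E' b ->
  ele mul a (ejoin mul a b) /\ ele mul b (ejoin mul a b).
Proof.
move=> Ha Hb; split; first exact/ele_ejoinl/HE_idem.
by apply: ele_ejoinr; [exact: HE_idem | exact: HE_comm].
Qed.

Lemma phi_directed : phi_directed_system mul E'.
Proof.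
split; [|split; [|split]].
- by move=> ei ej f /HE_idem Hi _ Hle; exact: is_End_phi.
- move=> ei ej f g /HE_idem Hi _ _ Hf _; split=> x _ //.
  exact: phi_opmul.
- by move=> ei f /HE_idem He _; exact: phi_End_eq.
- move=> ei ej ek f Hi Hj _ Hij _ _ x _.
  by apply: phi_phi => //; exact: HE_comm.
Qed.

Lemma theta_directed_iso : directed_systems_iso mul E'.
Proof.
split=> [ei /HE_idem Hi | ei ej f Hi Hj Hle _]; last first.
  by apply: theta_phi => //; exact: HE_comm.
split; [exact: theta_in_corner|split; [exact: theta_eq_End_eq|split]].
  move=> r Hr; exists (fun x => x ** r).
  by split; [exact: is_End_mulr | exact: theta_mulr].
split=> [f g Hf Hg|]; last by split; [exact: is_End_one|].
split; first exact: is_End_add.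
split; first exact: is_End_opmul.
by split; last exact: theta_opmul.
Qed.

Lemma Theta_eq a b : dl_ok mul E' a -> dl_ok mul E' b ->
  dl_eq mul E' a b <-> Theta a = Theta b.
Proof.
rewrite !ThetaE; case: a b => [ea fa] [eb fb] [/= Ha Hfa] [/= Hb Hfb]; split.
- case=> ek [Hk [/= Hak [/= Hbk Hab]]].
  rewrite -(theta_phi Hak (HE_comm Hk Ha) fa).
  rewrite -(theta_phi Hbk (HE_comm Hk Hb) fb).
  exact/Hab/in_Re_idem/HE_idem.
- move=> /= Hab; exists (ejoin mul ea eb).
  have [Haj Hbj] := ejoin_ub Ha Hb.
  split; first exact: HE_join.
  split=> //; split=> // x _ /=.
  by rewrite !phi_eval ?Hab //; exact: HE_idem.
Qed.

Lemma Theta_dl_addmul a b : dl_ok mul E' a -> dl_ok mul E' b ->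
  [/\ dl_ok mul E' (dl_add mul a b), dl_ok mul E' (dl_mul mul a b),
      Theta (dl_add mul a b) = Theta a + Theta b
    & Theta (dl_mul mul a b) = Theta a ** Theta b].
Proof.
case: a b => [ea fa] [eb fb] [Ha Hfa] [Hb Hfb].
have Hj := HE_join Ha Hb.
have [Haj Hbj] := ejoin_ub Ha Hb.
have Hfa' := is_End_phi (HE_idem Ha) Haj Hfa.
have Hfb' := is_End_phi (HE_idem Hb) Hbj Hfb.
have thetaA := theta_phi Haj (HE_comm Hj Ha) fa.
have thetaB := theta_phi Hbj (HE_comm Hj Hb) fb.
have Hj_idem := HE_idem Hj.
split.
- by split=> //; exact: is_End_add.
- by split=> //; exact: is_End_opmul.
- by rewrite !ThetaE theta_add thetaA thetaB.
- by rewrite !ThetaE theta_opmul // thetaA thetaB.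
Qed.

Lemma Theta_colimit_iso : colimit_iso mul E'.
Proof.
split; first exact: Theta_eq.
split=> [[e f] [He Hf] | ].
  by exists e; split=> //; exact: theta_in_corner (HE_idem He) _ Hf.
split=> [r [e [He Hr]] | ].
  exists (DL e (fun x => x ** r)).
  by split; [split=> //; exact: is_End_mulr | exact: theta_mulr (HE_idem He) _ Hr].
split=> [a b Ha Hb | e He]; first by case: (Theta_dl_addmul Ha Hb).
by split=> //; split=> //=; exact: is_End_one.
Qed.

End Directed.
End Rng.

Theorem theorem3p13 (V : zmodType) (mul : V -> V -> V) (E E' : V -> Prop) :
  rng_axioms mul ->
  local_units mul E ->
  (forall e, E' e -> E e) ->
  (forall e1 e2, E' e1 -> E' e2 -> E' (ejoin mul e1 e2) /\ E' (emeet mul e1 e2)) ->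
  phi_directed_system mul E' /\ directed_systems_iso mul E' /\ colimit_iso mul E'.
Proof.
move=> HR [Hidem [Hcomm _]] HE' Hclosed.
have HE_idem e : E' e -> Defs.idempotent mul e by move/HE'/Hidem.
have HE_comm e1 e2 : E' e1 -> E' e2 -> mul e1 e2 = mul e2 e1.
  by move=> /HE' H1 /HE' H2; exact: Hcomm.
have HE_join e1 e2 : E' e1 -> E' e2 -> E' (ejoin mul e1 e2).
  by move=> H1 H2; case: (Hclosed _ _ H1 H2).
split; first exact: phi_directed.
by split; [exact: theta_directed_iso | exact: Theta_colimit_iso].
Qed.
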